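(* Let $K$ be a field, $c\in K\setminus\{0\}$, and let $(x_j)_{j\in\mathbb{Z}}$ be indeterminates; define $x'_{2l}=x_{2l}$ and $x'_{2l+1}=-x_{2l+1}$ for all $l\in\mathbb{Z}$. Let $k\ge0$ and $j\in\mathbb{Z}$. (a) If $k\equiv0\pmod4$, then $P_k^{-c}(x'_j,\dots,x'_{j+k-1})=P_k^c(x_j,\dots,x_{j+k-1})$. (b) If $k\equiv1\pmod4$, then $P_k^{-c}(x'_j,\dots,x'_{j+k-1})=P_k^c(x_j,\dots,x_{j+k-1})$ for $j$ even and $=-P_k^c(x_j,\dots,x_{j+k-1})$ for $j$ odd. (c) If $k\equiv2\pmod4$, then $P_k^{-c}(x'_j,\dots,x'_{j+k-1})=-P_k^c(x_j,\dots,x_{j+k-1})$. (d) If $k\equiv3\pmod4$, then $P_k^{-c}(x'_j,\dots,x'_{j+k-1})=-P_k^c(x_j,\dots,x_{j+k-1})$ for $j$ even and $=P_k^c(x_j,\dots,x_{j+k-1})$ for $j$ odd.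
   Context: For a nonzero $a\in K$, the $a$-continuant polynomials $P_k^a$ ($k\ge -1$) are defined by $P_{-1}^a=0$, $P_0^a=1$ and, for $k\ge1$, $P_k^a(y_1,\dots,y_k)=y_kP_{k-1}^a(y_1,\dots,y_{k-1})+aP_{k-2}^a(y_1,\dots,y_{k-2})$, applied to any sequence of consecutive variables. *)

From HB Require Import structures.
From mathcomp Require Import all_boot all_algebra.
From mathcomp Require Import mpoly.
Set Implicit Arguments. Unset Strict Implicit. Unset Printing Implicit Defensive.
Import GRing.Theory.
Local Open Scope ring_scope.

(* a-continuant: cont a y k = P_k^a(y 0, ..., y (k-1)),
   P_0 = 1, P_1 = y_1 (= y_1 * P_0 + a * P_{-1}),
   P_{k+2} = y_{k+2} P_{k+1} + a P_k. *)
Fixpoint cont (R : comRingType) (a : R) (y : nat -> R) (k : nat) : R :=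
  match k with
  | 0 => 1
  | 1 => y 0%N
  | (k'.+1 as k1).+1 => y k1 * cont a y k1 + a * cont a y k'
  end.

Definition zodd (m : int) : bool := odd `|m|%N.

(* The indeterminates x_j, ..., x_{j+k-1} realised as the variables of
   the polynomial ring K[X_0, ..., X_{k-1}]: x_{j+i} is 'X_i. *)
Definition xvar (K : fieldType) (k i : nat) : {mpoly K[k]} :=
  if insub i is Some o then 'X_o else 0.

Definition xpvar (K : fieldType) (k : nat) (j : int) (i : nat) : {mpoly K[k]} :=
  if zodd (j + i%:Z) then - xvar K k i else xvar K k i.

From HB Require Import structures.
From mathcomp Require Import all_boot all_algebra.
From mathcomp Require Import mpoly ring.
Import GRing.Theory.
Local Open Scope ring_scope.

(* Write x'_{j+i} = u_i x_{j+i} with u_i = -1 exactly when j + i is odd.  Since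
   consecutive signs multiply to -1, the recursion P_{n+2} = y P_{n+1} + a P_n
   turns into the one with -a after scaling P_n by u_0 ... u_{n-1}; that product
   is 4-periodic in n, with values 1, u_0, -1, -u_0. *)

Lemma cont_SS (R : comRingType) (a : R) y n :
  cont a y n.+2 = y n.+1 * cont a y n.+1 + a * cont a y n.
Proof. by []. Qed.

Section AlternatingScaling.
Variables (R : comRingType) (u : nat -> R).
Hypothesis mul_uS : forall i, u i.+1 * u i = -1.

Lemma cont_alternating_scale (a : R) (y y' : nat -> R) n :
    (forall i, y' i = u i * y i) ->
  cont (- a) y' n = (\prod_(0 <= i < n) u i) * cont a y n.
Proof.
move=> y'E; suff [] : cont (- a) y' n = (\prod_(0 <= i < n) u i) * cont a y n /\
  cont (- a) y' n.+1 = (\prod_(0 <= i < n.+1) u i) * cont a y n.+1 by [].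
elim: n => [|n [IHn IHn1]]; first by rewrite /= y'E big_nat1 big_geq // mul1r.
split=> //; rewrite !cont_SS IHn IHn1 y'E !big_nat_recr //= mulrDr.
congr (_ + _); first by ring.
transitivity ((\prod_(0 <= i < n) u i) * (u n.+1 * u n) * (a * cont a y n)); last by ring.
by rewrite mul_uS; ring.
Qed.

Lemma prod_alternating_add4 n : \prod_(0 <= i < n + 4) u i = \prod_(0 <= i < n) u i.
Proof.
rewrite !addnS addn0 !big_nat_recr //=.
transitivity ((\prod_(0 <= i < n) u i) * (u n.+1 * u n) * (u n.+3 * u n.+2)); first by ring.
by rewrite !mul_uS !mulrN1 opprK.
Qed.

Lemma prod_alternating_mod4 n : \prod_(0 <= i < n) u i = \prod_(0 <= i < n %% 4) u i.
Proof.
rewrite {1}(divn_eq n 4); elim: (n %/ 4)%N => [|q IHq]; first by rewrite mul0n add0n.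
by rewrite mulSn -addnA addnC prod_alternating_add4.
Qed.

End AlternatingScaling.

Arguments cont_alternating_scale {R u}.
Arguments prod_alternating_mod4 {R u}.

Lemma zoddS (m : int) : zodd (m + 1) = ~~ zodd m.
Proof.
rewrite /zodd; case: m => n; first by rewrite /= addn1.
have -> : Negz n + 1 = - n%:Z by rewrite NegzE -addn1 PoszD opprD addrK.
by rewrite NegzE !abszN /= negbK.
Qed.

Definition zsign (R : comRingType) (m : int) : R := if zodd m then -1 else 1.

Lemma zsignS (R : comRingType) (m : int) : zsign R (m + 1) = - zsign R m.
Proof. by rewrite /zsign zoddS; case: (zodd m); rewrite ?opprK. Qed.

Lemma xpvarE (K : fieldType) k j i : xpvar K k j i = zsign _ (j + i%:Z) * xvar K k i.
Proof. by rewrite /xpvar /zsign; case: ifP; rewrite ?mulN1r ?mul1r. Qed.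

Theorem mainTheorem6 (K : fieldType) (c : K) (hc : c != 0) (k : nat) (j : int) :
  let P := cont (- c%:MP) (xpvar K k j) k in
  let Q := cont (c%:MP) (xvar K k) k in
  [/\ (k %% 4 = 0)%N -> P = Q,
      (k %% 4 = 1)%N -> P = (if zodd j then - Q else Q),
      (k %% 4 = 2)%N -> P = - Q
    & (k %% 4 = 3)%N -> P = (if zodd j then Q else - Q)].
Proof.
pose u i : {mpoly K[k]} := zsign _ (j + i%:Z).
have uS i : u i.+1 = - u i by rewrite /u -addn1 PoszD addrA zsignS.
have mul_uS i : u i.+1 * u i = -1.
  by rewrite uS mulNr /u /zsign; case: zodd; rewrite ?mulrNN mulr1.
move=> P Q; rewrite /P (cont_alternating_scale mul_uS _ _ _ _ (xpvarE K k j)).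
rewrite (prod_alternating_mod4 mul_uS) -/Q.
have u0 : u 0%N = zsign _ j by rewrite /u addr0.
split=> ->; rewrite ?big_nat_recr //= ?big_geq // ?uS ?u0 /zsign;
  case: (zodd j); ring.
Qed.
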